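(* Let $\mathbb{R}^n$ carry a norm $\|\cdot\|$ with dual norm $\|\cdot\|_*$, let $Q\subseteq\mathbb{R}^n$ be closed and convex, let $f_1,\dots,f_M$ be convex functions on $Q$, differentiable with $\|\nabla f_i(x)-\nabla f_i(y)\|_*\le L\|x-y\|$ for all $x,y\in Q$, and let $h$ be convex on $Q$. Put $f(x)=\max_{i=1,\dots,M}f_i(x)+h(x)$ and assume $f$ attains its minimum over $Q$ at $x_*$. Let $d$ be a prox-function on $Q$ with Bregman divergence $V$, $x_0\in Q$, $V(x_*,x_0)\le R^2$. Run the adaptive mirror triangle method for the minimax problem (described in the context) with starting point $x_0$, an integer $N\ge1$ of steps, and initial constant $L_0$ with $0<L_0\le L$. Then $$f(x_N)-f(x_* )\le\frac{8LR^2}{(N+1)^2}.$$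
   Context: $\|\lambda\|_*=\max_{\|\nu\|\le1}\langle\lambda,\nu\rangle$. A prox-function on $Q$ is a continuously differentiable $d:Q\to\mathbb{R}$, $1$-strongly convex w.r.t. $\|\cdot\|$; $V(x,y)=d(x)-d(y)-\langle\nabla d(y),x-y\rangle$. The adaptive method: set $y_0=u_0=x_0$, $L_1=L_0/2$, $\alpha_0=A_0=0$. Step $k+1$ ($k=0,\dots,N-1$), with current value $L_{k+1}$: (i) let $\alpha_{k+1}$ be the largest root of $A_k+\alpha=L_{k+1}\alpha^2$, and $A_{k+1}=A_k+\alpha_{k+1}$; (ii) $y_{k+1}=(\alpha_{k+1}u_k+A_kx_k)/A_{k+1}$; (iii) $u_{k+1}=\arg\min_{x\in Q}\{V(x,u_k)+\alpha_{k+1}(\max_{j}[f_j(y_{k+1})+\langle\nabla f_j(y_{k+1}),x-y_{k+1}\rangle]+h(x))\}$; (iv) $x_{k+1}=(\alpha_{k+1}u_{k+1}+A_kx_k)/A_{k+1}$; (v) if $f(x_{k+1})\le\max_j\{f_j(y_{k+1})+\langle\nabla f_j(y_{k+1}),x_{k+1}-y_{k+1}\rangle\}+\frac{L_{k+1}}{2}\|x_{k+1}-y_{k+1}\|^2+h(x_{k+1})$, set $L_{k+2}=L_{k+1}/2$ and go to the next step; otherwise replace $L_{k+1}$ by $2L_{k+1}$ and repeat step $k+1$ from (i). *)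

From HB Require Import structures.
From mathcomp Require Import all_boot all_order all_algebra.
From mathcomp Require Import all_classical all_reals all_analysis.
Set Implicit Arguments. Unset Strict Implicit. Unset Printing Implicit Defensive.
Import Order.TTheory GRing.Theory Num.Theory.
Import numFieldNormedType.Exports.
Local Open Scope classical_set_scope.
Local Open Scope ring_scope.

(* standard pairing <lambda, nu> on R^n (dual space identified with R^n) *)
Definition dotv (R : realType) (n : nat) (a b : 'rV[R]_n) : R :=
  \sum_(j < n) a 0 j * b 0 j.

Definition is_norm (R : realType) (n : nat) (nrm : 'rV[R]_n -> R) : Prop :=
  [/\ forall x, nrm x = 0 -> x = 0,
      forall (a : R) x, nrm (a *: x) = `|a| * nrm x
    & forall x y, nrm (x + y) <= nrm x + nrm y].

Definition dual_norm (R : realType) (n : nat) (nrm : 'rV[R]_n -> R)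
  (lam : 'rV[R]_n) : R :=
  sup [set dotv lam nu | nu in [set nu | nrm nu <= 1]].

Definition grad (R : realType) (n : nat) (f : 'rV[R]_n -> R) (x : 'rV[R]_n)
  : 'rV[R]_n := \row_(j < n) ('d f x) (delta_mx 0 j).

Definition convexR_set (R : realType) (n : nat) (Q : set 'rV[R]_n) : Prop :=
  forall x y (t : R), Q x -> Q y -> 0 <= t <= 1 -> Q (t *: x + (1 - t) *: y).

Definition convex_fun_on (R : realType) (n : nat) (Q : set 'rV[R]_n)
  (f : 'rV[R]_n -> R) : Prop :=
  forall x y (t : R), Q x -> Q y -> 0 <= t <= 1 ->
    f (t *: x + (1 - t) *: y) <= t * f x + (1 - t) * f y.

Definition strongly_convex1_on (R : realType) (n : nat) (nrm : 'rV[R]_n -> R)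
  (Q : set 'rV[R]_n) (d : 'rV[R]_n -> R) : Prop :=
  forall x y (t : R), Q x -> Q y -> 0 <= t <= 1 ->
    d (t *: x + (1 - t) *: y)
      <= t * d x + (1 - t) * d y - t * (1 - t) / 2 * nrm (x - y) ^+ 2.

Definition prox_function (R : realType) (n : nat) (nrm : 'rV[R]_n -> R)
  (Q : set 'rV[R]_n) (d : 'rV[R]_n -> R) : Prop :=
  [/\ forall x, Q x -> differentiable d x,
      {within Q, continuous (grad d)}
    & strongly_convex1_on nrm Q d].

Definition bregman (R : realType) (n : nat) (d : 'rV[R]_n -> R)
  (x y : 'rV[R]_n) : R := d x - d y - dotv (grad d y) (x - y).

Definition fmax (R : realType) (M : nat) (hM : (0 < M)%N) (g : 'I_M -> R) : R :=
  \big[Num.max/g (Ordinal hM)]_(i < M) g i.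

Definition fobj (R : realType) (n M : nat) (hM : (0 < M)%N)
  (fs : 'I_M -> 'rV[R]_n -> R) (h : 'rV[R]_n -> R) (x : 'rV[R]_n) : R :=
  fmax hM (fun i => fs i x) + h x.

Definition lin_model (R : realType) (n M : nat) (hM : (0 < M)%N)
  (fs : 'I_M -> 'rV[R]_n -> R) (y x : 'rV[R]_n) : R :=
  fmax hM (fun j => fs j y + dotv (grad (fs j) y) (x - y)).

(* One attempt of step k+1 with current constant Lc, from (A_k, x_k, u_k):
   produces alpha_{k+1}, y_{k+1}, u_{k+1}, x_{k+1} (steps (i)-(iv)). *)
Definition mtm_trial (R : realType) (n M : nat) (hM : (0 < M)%N)
  (fs : 'I_M -> 'rV[R]_n -> R) (h : 'rV[R]_n -> R) (d : 'rV[R]_n -> R)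
  (Q : set 'rV[R]_n) (Lc Ak : R) (xk uk : 'rV[R]_n)
  (a : R) (y u x : 'rV[R]_n) : Prop :=
  [/\
      Ak + a = Lc * a ^+ 2 /\ (forall b : R, Ak + b = Lc * b ^+ 2 -> b <= a),
      y = (Ak + a)^-1 *: (a *: uk + Ak *: xk),
      Q u /\ (forall z, Q z ->
        bregman d u uk + a * (lin_model hM fs y u + h u)
          <= bregman d z uk + a * (lin_model hM fs y z + h z))
    &
      x = (Ak + a)^-1 *: (a *: u + Ak *: xk)].

Definition mtm_accept (R : realType) (n M : nat) (hM : (0 < M)%N)
  (fs : 'I_M -> 'rV[R]_n -> R) (h : 'rV[R]_n -> R) (nrm : 'rV[R]_n -> R)
  (Lc : R) (y x : 'rV[R]_n) : Prop :=
  fobj hM fs h x <= lin_model hM fs y x + Lc / 2 * nrm (x - y) ^+ 2 + h x.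

(* Lacc k = accepted value of L_{k+1}; Lstart k = value of L_{k+1} at entry of
   step k+1 (L_1 = L_0/2, L_{k+2} = L_{k+1}/2); cnt k = number of doublings;
   every earlier attempt j < cnt k was computed and rejected. *)
Definition mtm_run (R : realType) (n M : nat) (hM : (0 < M)%N)
  (fs : 'I_M -> 'rV[R]_n -> R) (h : 'rV[R]_n -> R) (d : 'rV[R]_n -> R)
  (nrm : 'rV[R]_n -> R) (Q : set 'rV[R]_n) (L0 : R) (x0 : 'rV[R]_n) (N : nat)
  (Lacc alpha A : nat -> R) (x y u : nat -> 'rV[R]_n) : Prop :=
  let Lstart k := if k is k'.+1 then Lacc k' / 2 else L0 / 2 in
  [/\ x 0%N = x0, u 0%N = x0, y 0%N = x0, A 0%N = 0 /\ alpha 0%N = 0 &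
   exists cnt : nat -> nat, forall k, (k < N)%N ->
     [/\ Lacc k = Lstart k * 2 ^+ cnt k,
         A k.+1 = A k + alpha k.+1,
         mtm_trial hM fs h d Q (Lacc k) (A k) (x k) (u k)
           (alpha k.+1) (y k.+1) (u k.+1) (x k.+1),
         mtm_accept hM fs h nrm (Lacc k) (y k.+1) (x k.+1)
       & forall j, (j < cnt k)%N ->
           exists a' y' u' x',
             mtm_trial hM fs h d Q (Lstart k * 2 ^+ j) (A k) (x k) (u k) a' y' u' x'
             /\ ~ mtm_accept hM fs h nrm (Lstart k * 2 ^+ j) y' x']].

From HB Require Import structures.
From mathcomp Require Import all_boot all_order all_algebra.
From mathcomp Require Import all_classical all_reals all_analysis.
From mathcomp Require Import ring lra.
Import Order.TTheory GRing.Theory Num.Theory.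
Import numFieldNormedType.Exports.
Set Implicit Arguments. Unset Strict Implicit. Unset Printing Implicit Defensive.
Local Open Scope classical_set_scope.
Local Open Scope ring_scope.

(* Write F for the objective and P_y(z) = max_j [f_j(y) + <grad f_j(y), z - y>] + h(z) for the
   model minimised in step (iii); P_y <= F on Q by convexity of the f_j.  An accepted step gives
     A_{k+1} F(x_{k+1}) - A_k F(x_k) <= alpha_{k+1} F(xstar) + V(xstar, u_k) - V(xstar, u_{k+1}):
   the test (v) bounds A_{k+1} F(x_{k+1}) by A_{k+1} P_y(x_{k+1}) plus a quadratic term which,
   because x_{k+1} - y_{k+1} = (alpha_{k+1}/A_{k+1}) (u_{k+1} - u_k) and
   L_{k+1} alpha_{k+1}^2 = A_{k+1}, equals ||u_{k+1} - u_k||^2 / 2 <= V(u_{k+1}, u_k); convexity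
   of P_y along x_{k+1} = (alpha u_{k+1} + A_k x_k) / A_{k+1} and the three-point inequality of
   the prox step (iii) finish the estimate.  Telescoping yields
   A_N (F(x_N) - F(xstar)) <= V(xstar, x_0) <= R^2.
   By the descent lemma the test passes as soon as L_{k+1} >= L, so every accepted constant is at
   most 2L.  Then A_{k+1} <= 2L alpha_{k+1}^2, i.e. sqrt A_{k+1} >= sqrt A_k + 1/sqrt(8L), and
   A_1 >= 1/(2L), whence 8L A_N >= (N+1)^2. *)

Section Pairing.
Variables (R : realType) (n : nat).
Implicit Types (a b c : 'rV[R]_n) (k : R).

Lemma dotvDr a b c : dotv a (b + c) = dotv a b + dotv a c.
Proof. by rewrite /dotv -big_split; apply: eq_bigr => j _; rewrite mxE mulrDr. Qed.

Lemma dotvZr k a b : dotv a (k *: b) = k * dotv a b.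
Proof. by rewrite /dotv mulr_sumr; apply: eq_bigr => j _; rewrite mxE mulrCA. Qed.

Lemma dotvBl a b c : dotv (a - b) c = dotv a c - dotv b c.
Proof. by rewrite /dotv -sumrB; apply: eq_bigr => j _; rewrite !mxE mulrBl. Qed.

Lemma diff_grad (g : 'rV[R]_n -> R) p v : 'd g p v = dotv (grad g p) v.
Proof.
rewrite {1}(row_sum_delta v) linear_sum /dotv; apply: eq_bigr => j _.
by rewrite linearZ /= mxE mulrC.
Qed.

End Pairing.

Section NormFacts.
Variables (R : realType) (n : nat) (nrm : 'rV[R]_n -> R).
Hypothesis hn : is_norm nrm.

Lemma nrmZ (a : R) x : nrm (a *: x) = `|a| * nrm x.
Proof. by case: hn. Qed.

Lemma nrm_triangle x y : nrm (x + y) <= nrm x + nrm y.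
Proof. by case: hn. Qed.

Lemma nrm0 : nrm 0 = 0.
Proof. by rewrite -(scale0r 0) nrmZ normr0 mul0r. Qed.

Lemma nrmN x : nrm (- x) = nrm x.
Proof. by rewrite -scaleN1r nrmZ normrN normr1 mul1r. Qed.

Lemma nrm_ge0 x : 0 <= nrm x.
Proof. by have := nrm_triangle x (- x); rewrite subrr nrm0 nrmN; lra. Qed.

Lemma nrm_gt0 x : x != 0 -> 0 < nrm x.
Proof.
move=> x0; rewrite lt_def nrm_ge0 andbT; apply: contraNneq x0.
by case: hn => nrm_eq0 _ _ /nrm_eq0 ->.
Qed.

Lemma nrm_sum (I : finType) (F : I -> 'rV[R]_n) :
  nrm (\sum_i F i) <= \sum_i nrm (F i).
Proof.
elim/big_ind2 : _ => [|a b c d ha hc|//]; first by rewrite nrm0.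
exact: le_trans (nrm_triangle _ _) (lerD ha hc).
Qed.

Lemma mx_entry_le_norm m (v : 'M[R]_(m, n)) i j : `|v i j| <= `|v|.
Proof.
have -> : `|v| = mx_norm v by [].
rewrite mx_normrE.
exact: (le_bigmax _ (fun ij : 'I_m * 'I_n => `|v ij.1 ij.2|) (i, j)).
Qed.

Let nrm_basis := \sum_(j < n) nrm (delta_mx 0 j).

Let nrm_le_basis v : nrm v <= nrm_basis * `|v|.
Proof.
rewrite {1}(row_sum_delta v) /nrm_basis mulr_suml.
apply: le_trans (nrm_sum _) _; apply: ler_sum => j _.
by rewrite nrmZ mulrC ler_wpM2l ?nrm_ge0 ?mx_entry_le_norm.
Qed.

Lemma nrm_continuous : continuous nrm.
Proof.
move=> x; apply/(@cvgrPdist_le _ _ _ (nbhs x) (nbhs_filter x)) => e e0.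
have C0 : 0 <= nrm_basis by apply: sumr_ge0 => j _; exact: nrm_ge0.
have e1 : 0 < e / (nrm_basis + 1) by apply: divr_gt0 => //; lra.
near=> y.
have xy_close : `|x - y| <= e / (nrm_basis + 1).
  near: y; exact: (@cvgr_dist_le _ _ _ _ (nbhs_filter x) id x cvg_id).
have basis_xy : nrm_basis * `|x - y| <= e.
  apply: le_trans (ler_wpM2l C0 xy_close) _.
  by rewrite mulrA ler_pdivrMr; nra.
have tri_x : nrm x <= nrm y + nrm (x - y).
  by have := nrm_triangle y (x - y); rewrite subrKC.
have tri_y : nrm y <= nrm x + nrm (x - y).
  by have := nrm_triangle x (y - x); rewrite subrKC -(opprB x y) nrmN.
have := nrm_le_basis (x - y); rewrite ler_norml; lra.
Unshelve. all: by end_near.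
Qed.

Lemma nrm_ge_scaled_mx_norm : exists2 c : R, 0 < c & forall v, c * `|v| <= nrm v.
Proof.
pose S := [set v : 'rV[R]_n | `|v| = 1].
have normalize v : v != 0 -> S (`|v|^-1 *: v).
  by move=> v0; rewrite /S /= normrZ normfV normr_id mulVf ?normr_eq0.
have [[w Sw]|S0] := pselect (S !=set0); last first.
  exists 1 => // v; have [->|v0] := eqVneq v 0; first by rewrite normr0 mulr0 nrm_ge0.
  by exfalso; apply: S0; exists (`|v|^-1 *: v); exact: normalize.
have cS : compact S.
  apply: bounded_closed_compact; first by exists 1; split => // M M1 v /= ->; exact: ltW.
  apply: (@preimage_closed _ _ (fun v : 'rV[R]_n => `|v|) [set x : R | x = 1]).
    by move=> ? _; exact: norm_continuous.
  exact: closed_eq.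
have [c Sc cmin] :=
  compact_EVT_min (ex_intro _ w Sw) cS (continuous_subspaceT nrm_continuous).
have c0 : c != 0.
  by apply/eqP => c0; move: Sc; rewrite inE c0 /S /= normr0 => /eqP; rewrite eq_sym oner_eq0.
exists (nrm c); first exact: nrm_gt0.
move=> v; have [->|v0] := eqVneq v 0; first by rewrite normr0 mulr0 nrm_ge0.
have := cmin (`|v|^-1 *: v); rewrite inE => /(_ (normalize v v0)).
rewrite nrmZ normfV normr_id.
by rewrite -ler_pdivlMr ?normr_gt0 // mulrC.
Qed.

End NormFacts.

(* [nrm_ge_scaled_mx_norm] makes the set defining the dual norm bounded; otherwise [sup]
   would return a junk value and the inequality could fail. *)
Lemma dotv_le_dual_norm (R : realType) n (nrm : 'rV[R]_n -> R) (lam nu : 'rV[R]_n) :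
  is_norm nrm -> dotv lam nu <= dual_norm nrm lam * nrm nu.
Proof.
move=> hn; have [c c0 hc] := nrm_ge_scaled_mx_norm hn.
set S := [set dotv lam nu | nu in [set nu | nrm nu <= 1]].
have supS : has_sup S.
  split; first by exists (dotv lam 0), 0 => //=; rewrite nrm0.
  exists ((\sum_j `|lam 0 j|) / c) => _ [w /= w1 <-].
  have wc : `|w| <= c^-1 by rewrite -[c^-1]mul1r ler_pdivlMr // mulrC (le_trans (hc w)).
  rewrite /dotv mulr_suml; apply: ler_sum => j _.
  rewrite (le_trans (ler_norm _)) // normrM ler_wpM2l //.
  exact: le_trans (mx_entry_le_norm _ _ _) wc.
have [->|nu0] := eqVneq nu 0.
  by rewrite (nrm0 hn) mulr0 /dotv big1 // => j _; rewrite mxE mulr0.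
have nu_gt0 := nrm_gt0 hn nu0.
rewrite -ler_pdivrMr // mulrC -dotvZr.
apply: sup_upper_bound => //; exists ((nrm nu)^-1 *: nu) => //=.
by rewrite (nrmZ hn) gtr0_norm ?invr_gt0 // mulVf ?gt_eqF.
Qed.

Section LineDerivatives.
Variables (R : realType) (n : nat).
Implicit Types (g : 'rV[R]_n -> R) (p v w : 'rV[R]_n).

Lemma line_comb v w (t : R) : t *: (v - w) + w = t *: v + (1 - t) *: w.
Proof. by rewrite scalerBr scalerBl scale1r -!addrA [- _ + w]addrC. Qed.

Lemma diff_ge_quotient g p v (c b : R) : differentiable g p ->
  (forall t : R, 0 < t -> t <= 1 -> c <= (g (t *: v + p) - g p) / t + b * t) ->
  c <= 'd g p v.
Proof.
move=> dg H; rewrite -deriveE //.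
pose q (h : R) := h^-1 *: ((g \o shift p) (h *: v) - g p).
have q_cvg : q @ 0^' --> 'D_v g p := @diff_derivable _ _ _ g p v dg.
have qr : q @ 0^'+ --> 'D_v g p.
  apply: cvg_trans q_cvg; apply: cvg_app => P [e e0 He]; exists e => // h Hh h0.
  by apply: He => //; rewrite gt_eqF.
have qbr : (fun h => q h + b * h) @ 0^'+ --> 'D_v g p + b * 0.
  by apply: cvgD => //; apply: cvgMr; apply: cvg_at_right_filter; exact: cvg_id.
rewrite mulr0 addr0 in qbr; apply: (cvgr_to_ge qbr); near=> h.
rewrite /q /= /shift -[_ *: (_ - _)]/(_ * _) [_^-1 * _]mulrC; apply: H.
- by near: h; exact: nbhs_right_gt.
- by near: h; apply: nbhs_right_le; exact: ltr01.
Unshelve. all: by end_near.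
Qed.

Lemma diff_le_quotient g p v (c b : R) : differentiable g p ->
  (forall t : R, 0 < t -> t <= 1 -> (g (t *: v + p) - g p) / t <= c + b * t) ->
  'd g p v <= c.
Proof.
move=> dg H; rewrite -lerN2.
have <- : 'd (fun x => - g x) p v = - 'd g p v by rewrite diffN.
apply: (diff_ge_quotient (b := b) (differentiableN dg)) => t t0 t1.
by have := H t t0 t1; rewrite /= -[(- g) p]/(- g p) -opprD mulNr; lra.
Qed.

Lemma is_derive_line g v w (t : R) : differentiable g (t *: v + w) ->
  is_derive t 1 (fun s : R => g (s *: v + w)) ('d g (t *: v + w) v).
Proof.
move=> dg; have dl := @diff_derivable _ _ _ g _ v dg.
have E : (fun h : R => h^-1 *: (((fun s : R => g (s *: v + w)) \o shift t) (h *: 1)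
                               - g (t *: v + w)))
    = (fun h : R => h^-1 *: ((g \o shift (t *: v + w)) (h *: v) - g (t *: v + w))).
  by apply: funext => h /=; rewrite /shift /= scaler1 scalerDl addrA.
by apply: DeriveDef; rewrite /derivable ?/derive E // -deriveE.
Qed.

End LineDerivatives.

Lemma le_fmax (R : realType) M (hM : (0 < M)%N) (g : 'I_M -> R) i : g i <= fmax hM g.
Proof. exact: (le_bigmax _ g i). Qed.

Lemma fmax_le (R : realType) M (hM : (0 < M)%N) (g : 'I_M -> R) c :
  (forall i, g i <= c) -> fmax hM g <= c.
Proof. by move=> gc; apply: bigmax_le. Qed.

Section Convexity.
Variables (R : realType) (n : nat) (Q : set 'rV[R]_n).
Implicit Types (f g d : 'rV[R]_n -> R) (u w y z : 'rV[R]_n).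

Lemma convex_fun_onD f g :
  convex_fun_on Q f -> convex_fun_on Q g -> convex_fun_on Q (f \+ g).
Proof.
move=> cf cg z1 z2 t Q1 Q2 t01; have := cf z1 z2 t Q1 Q2 t01.
by have := cg z1 z2 t Q1 Q2 t01; rewrite /=; lra.
Qed.

Lemma convex_fun_on_fmax M (hM : (0 < M)%N) (g : 'I_M -> 'rV[R]_n -> R) :
  (forall i, convex_fun_on Q (g i)) -> convex_fun_on Q (fun z => fmax hM (g^~ z)).
Proof.
move=> cg z1 z2 t Q1 Q2 /[dup] t01 /andP[t0 t1]; apply: fmax_le => i.
apply: le_trans (cg i z1 z2 t Q1 Q2 t01) _.
by rewrite lerD // ler_wpM2l ?subr_ge0 ?le_fmax.
Qed.

Lemma convex_fun_on_affine (c : R) (a y : 'rV[R]_n) :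
  convex_fun_on Q (fun z => c + dotv a (z - y)).
Proof.
move=> z1 z2 t _ _ _ /=.
have -> : t *: z1 + (1 - t) *: z2 - y = t *: (z1 - y) + (1 - t) *: (z2 - y).
  by rewrite !scalerBr addrACA -opprD -scalerDl subrKC scale1r.
by rewrite (dotvDr a (t *: _)) !dotvZr; lra.
Qed.

Lemma convex_grad_le f z w : convex_fun_on Q f -> differentiable f w -> Q z -> Q w ->
  f w + dotv (grad f w) (z - w) <= f z.
Proof.
move=> cf df Qz Qw; rewrite -diff_grad -lerBrDl.
apply: (diff_le_quotient (b := 0) df) => t t0 t1.
have t01 : 0 <= t <= 1 by rewrite t1 ltW.
by rewrite line_comb mul0r addr0 ler_pdivrMr //; have := cf z w t Qz Qw t01; lra.
Qed.

Lemma bregman_ge_sqr nrm d u w : strongly_convex1_on nrm Q d -> differentiable d w ->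
  Q u -> Q w -> nrm (u - w) ^+ 2 / 2 <= bregman d u w.
Proof.
move=> sd dd Qu Qw; set N := nrm (u - w) ^+ 2.
suff : 'd d w (u - w) <= d u - d w - N / 2 by rewrite diff_grad /bregman; lra.
apply: (diff_le_quotient (b := N / 2) dd) => t t0 t1.
have t01 : 0 <= t <= 1 by rewrite t1 ltW.
by rewrite line_comb ler_pdivrMr //; have := sd u w t Qu Qw t01; rewrite -/N; lra.
Qed.

Lemma bregman_three_point d z u uk :
  bregman d z uk = bregman d u uk + bregman d z u + dotv (grad d u - grad d uk) (z - u).
Proof.
rewrite /bregman; move: (grad d u) (grad d uk) => gu gk.
have -> : z - uk = (z - u) + (u - uk) by rewrite addrA (subrK u).
by rewrite dotvDr dotvBl; ring.
Qed.

Lemma prox_three_point d psi (a : R) u uk z :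
  convexR_set Q -> differentiable d u -> convex_fun_on Q psi -> 0 <= a -> Q u -> Q z ->
  (forall z, Q z -> bregman d u uk + a * psi u <= bregman d z uk + a * psi z) ->
  bregman d u uk + a * psi u + bregman d z u <= bregman d z uk + a * psi z.
Proof.
move=> cQ dd cpsi a0 Qu Qz umin.
have key : dotv (grad d uk) (z - u) - a * (psi z - psi u) <= 'd d u (z - u).
  apply: (diff_ge_quotient (b := 0) dd) => t t0 t1.
  rewrite mul0r addr0 ler_pdivlMr //.
  have t01 : 0 <= t <= 1 by rewrite t1 ltW.
  have Qzt : Q (t *: (z - u) + u) by rewrite line_comb; exact: cQ.
  have := umin _ Qzt; rewrite /bregman -[t *: (z - u) + u - uk]addrA.
  rewrite (dotvDr _ (t *: _)) dotvZr.
  have := ler_wpM2l a0 (cpsi z u t Qz Qu t01); rewrite -(line_comb z u t).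
  move: (d (t *: (z - u) + u)) (psi (t *: (z - u) + u)) (dotv (grad d uk) (z - u))
    (dotv (grad d uk) (u - uk)) => dzt pzt G Gu; lra.
rewrite diff_grad in key; rewrite (bregman_three_point d z u uk) dotvBl.
move: key; generalize (dotv (grad d uk) (z - u)) (dotv (grad d u) (z - u))
  (bregman d u uk) (bregman d z u) => G1 G2 V1 V2; lra.
Qed.

End Convexity.

Lemma descent_lemma (R : realType) n (nrm : 'rV[R]_n -> R) Q (f : 'rV[R]_n -> R) (L : R)
    z w :
  is_norm nrm -> convexR_set Q -> (forall z, Q z -> differentiable f z) ->
  (forall z w, Q z -> Q w -> dual_norm nrm (grad f z - grad f w) <= L * nrm (z - w)) ->
  Q z -> Q w ->
  f z <= f w + dotv (grad f w) (z - w) + L / 2 * nrm (z - w) ^+ 2.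
Proof.
move=> hn cQ df hL Qz Qw.
set v := z - w; set G := dotv (grad f w) v; set K := L / 2 * nrm v ^+ 2.
have Qs (s : R) : 0 <= s <= 1 -> Q (s *: v + w).
  by move=> s01; rewrite /v line_comb; exact: cQ.
(* F measures f along [w, z] against the claimed quadratic bound; the Lipschitz gradient makes
   F' <= 0 on ]0, 1[, so F 1 <= F 0 by the mean value theorem. *)
pose F s := f (s *: v + w) - (G * s + K * (s * s)).
pose dF s := dotv (grad f (s *: v + w)) v - (G + K * (s + s)).
have DF (s : R) : 0 <= s <= 1 -> is_derive s 1 F (dF s).
  move=> s01; rewrite /dF -diff_grad.
  apply: is_deriveB; first exact: is_derive_line (df _ (Qs s s01)).
  by apply: is_derive_eq; rewrite /GRing.scale /= !mulr1.
have [c] : exists2 c, c \in `]0, 1[ & F 1 - F 0 = dF c * (1 - 0).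
  apply: MVT => //.
    by move=> x; rewrite in_itv /= => /andP[x0 x1]; apply: DF; rewrite !ltW.
  apply: continuous_in_subspaceT => x; rewrite inE /= in_itv /= => x01.
  exact/differentiable_continuous/derivable1_diffP/ex_derive/DF.
rewrite in_itv /= => /andP[c0 c1] Fc.
have dF_le0 (s : R) : 0 < s -> s <= 1 -> dF s <= 0.
  move=> s0 s1; have Qsvw : Q (s *: v + w) by apply: Qs; rewrite s1 ltW.
  have Ls := hL _ _ Qsvw Qw; rewrite addrK (nrmZ hn) gtr0_norm // in Ls.
  have := dotv_le_dual_norm (grad f (s *: v + w) - grad f w) v hn.
  have := ler_wpM2r (nrm_ge0 hn v) Ls.
  rewrite /dF dotvBl /G /K.
  generalize (dotv (grad f (s *: v + w)) v) (dotv (grad f w) v) (nrm v)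
    (dual_norm nrm (grad f (s *: v + w) - grad f w)) => Gs Gw N D; lra.
have F1 : F 1 = f z - (G + K) by rewrite /F scale1r /v (subrK w z) !mulr1.
have F0 : F 0 = f w by rewrite /F scale0r add0r !mulr0 addr0 subr0.
have := dF_le0 c c0 (ltW c1); rewrite subr0 mulr1 in Fc; rewrite -Fc F1 F0.
by generalize (f z) (f w) G K => fz fw G' K'; lra.
Qed.

Lemma largest_root_gt0 (R : realType) (Lc Ak a : R) : 0 < Lc -> 0 <= Ak ->
  (forall b : R, Ak + b = Lc * b ^+ 2 -> b <= a) -> 0 < a.
Proof.
move=> Lc0 Ak0 amax; set s := Num.sqrt (1 + 4 * Lc * Ak).
have s2 : s ^+ 2 = 1 + 4 * Lc * Ak by rewrite sqr_sqrtr //; nra.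
have s0 : 0 <= s := sqrtr_ge0 _.
pose b := (1 + s) / (2 * Lc).
apply: lt_le_trans (amax b _); first by rewrite divr_gt0; lra.
apply/eqP; rewrite eq_sym -subr_eq0; apply/eqP.
have -> : Lc * b ^+ 2 - (Ak + b) = (s ^+ 2 - (1 + 4 * Lc * Ak)) / (4 * Lc).
  by rewrite /b; field; lra.
by rewrite s2 subrr mul0r.
Qed.

Lemma scale_comb (R : realType) n (Ak a : R) (p q : 'rV[R]_n) : Ak + a != 0 ->
  (Ak + a)^-1 *: (a *: p + Ak *: q) = (a / (Ak + a)) *: p + (1 - a / (Ak + a)) *: q.
Proof.
by move=> A0; rewrite scalerDr !scalerA mulrC; congr (_ + _ *: _); field.
Qed.

Lemma sqr_addr1_le (R : realType) (m b c : R) :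
  1 <= m -> m ^+ 2 <= b -> b < c -> 4 * c <= (c - b) ^+ 2 -> (m + 1) ^+ 2 <= c.
Proof.
move=> m1 mb bc gap; have c0 : 0 <= c by nra.
have [s0 sc] : 0 <= Num.sqrt c /\ Num.sqrt c ^+ 2 = c by rewrite sqrtr_ge0 sqr_sqrtr.
set s := Num.sqrt c in s0 sc *.
have gap_s : 2 * s <= c - b by nra.
have ms : m + 1 <= s by nra.
by rewrite -sc; nra.
Qed.

Lemma sqr_le_of_gap (R : realType) (B : nat -> R) N : B 0 = 0 ->
  (forall k, (k < N)%N -> B k < B k.+1 /\ 4 * B k.+1 <= (B k.+1 - B k) ^+ 2) ->
  forall k, (1 <= k <= N)%N -> (k.+1)%:R ^+ 2 <= B k.
Proof.
move=> B0 gap; elim=> // k IH /andP[_ kN]; have [lt sq] := gap k kN.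
case: k IH lt sq kN => [_|k IH] lt sq kN.
  by rewrite B0 subr0 in lt sq *; nra.
rewrite -natr1; apply: sqr_addr1_le lt sq; first by rewrite ler1n.
exact: IH (ltnW kN).
Qed.

Lemma mul_le_of_le_scaled (R : realType) (D P B C : R) :
  0 <= P <= B -> 0 <= C -> B * D <= C -> D * P <= C.
Proof. by case/andP=> P0 PB C0 BD; case: (lerP D 0) => D0; nra. Qed.

Section MirrorTriangleStep.
Variables (R : realType) (n M : nat) (hM : (0 < M)%N).
Variables (nrm : 'rV[R]_n -> R) (Q : set 'rV[R]_n).
Variables (fs : 'I_M -> 'rV[R]_n -> R) (h d : 'rV[R]_n -> R) (L : R).
Hypotheses (hn : is_norm nrm) (cQ : convexR_set Q).
Hypotheses (cf : forall i, convex_fun_on Q (fs i))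
  (df : forall i z, Q z -> differentiable (fs i) z)
  (hL : forall i z w, Q z -> Q w ->
     dual_norm nrm (grad (fs i) z - grad (fs i) w) <= L * nrm (z - w)).
Hypotheses (ch : convex_fun_on Q h) (pd : prox_function nrm Q d).

Local Notation F := (fobj hM fs h).

Lemma model_convex y : convex_fun_on Q (fun z => lin_model hM fs y z + h z).
Proof.
apply: convex_fun_onD ch; apply: convex_fun_on_fmax => j.
exact: convex_fun_on_affine.
Qed.

Lemma model_le_fobj y z : Q y -> Q z -> lin_model hM fs y z + h z <= F z.
Proof.
move=> Qy Qz; rewrite lerD2r; apply: fmax_le => i.
exact: le_trans (convex_grad_le (cf i) (df i Qy) Qz Qy) (le_fmax _ _ i).
Qed.

Lemma accept_of_ge (Lc : R) y x : L <= Lc -> Q y -> Q x ->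
  mtm_accept hM fs h nrm Lc y x.
Proof.
move=> LLc Qy Qx; rewrite /mtm_accept lerD2r; apply: fmax_le => i.
have LN : L / 2 * nrm (x - y) ^+ 2 <= Lc / 2 * nrm (x - y) ^+ 2.
  by rewrite ler_wpM2r ?exprn_ge0 ?nrm_ge0 ?ler_pM2r.
apply: le_trans (descent_lemma hn cQ (df i) (hL i) Qx Qy) _.
by rewrite lerD // le_fmax.
Qed.

Section Trial.
Variables (Lc Ak : R) (xk uk : 'rV[R]_n) (a : R) (y u x : 'rV[R]_n).
Hypotheses (Qxk : Q xk) (Quk : Q uk) (Ak_ge0 : 0 <= Ak) (Lc_gt0 : 0 < Lc).
Hypothesis trial : mtm_trial hM fs h d Q Lc Ak xk uk a y u x.

Let a_gt0 : 0 < a.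
Proof. by case: trial => [[_ amax] _ _ _]; exact: largest_root_gt0 Lc_gt0 Ak_ge0 amax. Qed.

Let A_gt0 : 0 < Ak + a := ltr_wpDl Ak_ge0 a_gt0.

Let weight01 : 0 <= a / (Ak + a) <= 1.
Proof. by rewrite divr_ge0 ?(ltW a_gt0) ?(ltW A_gt0) //= ler_pdivrMr // mul1r lerDr. Qed.

Lemma trial_props : [/\ 0 < a, Q y, Q u & Q x].
Proof.
case: trial => [_ -> [Qu _] ->].
by split; rewrite // scale_comb ?gt_eqF //; exact: cQ.
Qed.

Lemma rejected_lt : ~ mtm_accept hM fs h nrm Lc y x -> Lc < L.
Proof.
move=> rej; have [_ Qy _ Qx] := trial_props; rewrite ltNge.
by apply/negP => LLc; apply: rej; exact: accept_of_ge.
Qed.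

Lemma step_estimate xstar : Q xstar -> mtm_accept hM fs h nrm Lc y x ->
  (Ak + a) * F x - Ak * F xk <= a * F xstar + bregman d xstar uk - bregman d xstar u.
Proof.
move=> Qs acc; have [_ Qy Qu Qx] := trial_props.
case: pd trial => dd _ sd [[root _] ey [_ umin] ex].
have weight_a : (Ak + a) * (a / (Ak + a)) = a by rewrite mulrC divfK ?gt_eqF.
pose P z := lin_model hM fs y z + h z.
have P_le_F z : Q z -> P z <= F z by exact: model_le_fobj.
have P_cvx : convex_fun_on Q P := model_convex y.
have Px_le : (Ak + a) * P x <= a * P u + Ak * P xk.
  have := P_cvx _ _ _ Qu Qxk weight01; rewrite -scale_comb ?gt_eqF // -ex.
  have weight_Ak : (Ak + a) * (1 - a / (Ak + a)) = Ak.
    by rewrite mulrBr mulr1 weight_a addrK.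
  move=> Px; apply: le_trans (ler_wpM2l (ltW A_gt0) Px) _.
  by rewrite mulrDr [_ * (a / _ * _)]mulrA [_ * ((1 - _) * _)]mulrA weight_a weight_Ak.
have Fx_le : (Ak + a) * F x <= (Ak + a) * P x + nrm (u - uk) ^+ 2 / 2.
  move: acc; rewrite /mtm_accept /P.
  have -> : x - y = (a / (Ak + a)) *: (u - uk).
    by rewrite ex ey -scalerBr opprD addrACA subrr addr0 -scalerBr scalerA mulrC.
  rewrite (nrmZ hn) ger0_norm; last by case/andP: weight01.
  generalize (F x) (lin_model hM fs y x) (h x) (nrm (u - uk)) => fx lx hx N.
  move/(ler_wpM2l (ltW A_gt0)).
  have -> : (Ak + a) * (lx + Lc / 2 * (a / (Ak + a) * N) ^+ 2 + hx)
      = (Ak + a) * (lx + hx) + (Lc * a ^+ 2) / (Ak + a) * (N ^+ 2 / 2).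
    by field; rewrite gt_eqF.
  by rewrite -root divff ?gt_eqF // mul1r.
have tp := prox_three_point cQ (dd u Qu) P_cvx (ltW a_gt0) Qu Qs umin.
have Vb := bregman_ge_sqr sd (dd uk Quk) Qu Quk.
have := ler_wpM2l Ak_ge0 (P_le_F xk Qxk); have := ler_wpM2l (ltW a_gt0) (P_le_F xstar Qs).
move: Px_le Fx_le tp Vb.
generalize (P x) (P u) (P xk) (P xstar) (F x) (F xk) (F xstar) (bregman d u uk)
  (bregman d xstar uk) (bregman d xstar u) (nrm (u - uk) ^+ 2).
move=> *; lra.
Qed.

End Trial.

Lemma accepted_const_le (Ls Ak : R) xk uk (c : nat) :
  Q xk -> Q uk -> 0 <= Ak -> 0 < Ls -> Ls <= L ->
  (forall j, (j < c)%N -> exists a' y' u' x',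
     mtm_trial hM fs h d Q (Ls * 2 ^+ j) Ak xk uk a' y' u' x'
     /\ ~ mtm_accept hM fs h nrm (Ls * 2 ^+ j) y' x') ->
  Ls * 2 ^+ c <= 2 * L.
Proof.
move=> Qxk Quk Ak0 Ls0 LsL; case: c => [_|j rej]; first by rewrite mulr1; lra.
have [a' [y' [u' [x' [tr nacc]]]]] := rej j (ltnSn j).
have := rejected_lt Qxk Quk Ak0 (mulr_gt0 Ls0 (exprn_gt0 j (ltr0Sn R 1))) tr nacc.
by rewrite exprS mulrCA; lra.
Qed.

End MirrorTriangleStep.

Section MirrorTriangleRun.
Variables (R : realType) (n M : nat) (hM : (0 < M)%N).
Variables (nrm : 'rV[R]_n -> R) (Q : set 'rV[R]_n).
Variables (fs : 'I_M -> 'rV[R]_n -> R) (h d : 'rV[R]_n -> R) (L : R).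
Variables (xstar x0 : 'rV[R]_n) (L0 : R) (N : nat).
Variables (Lacc alpha A : nat -> R) (x y u : nat -> 'rV[R]_n).
Hypotheses (hn : is_norm nrm) (cQ : convexR_set Q).
Hypotheses (cf : forall i, convex_fun_on Q (fs i))
  (df : forall i z, Q z -> differentiable (fs i) z)
  (hL : forall i z w, Q z -> Q w ->
     dual_norm nrm (grad (fs i) z - grad (fs i) w) <= L * nrm (z - w)).
Hypotheses (ch : convex_fun_on Q h) (pd : prox_function nrm Q d).
Hypotheses (Qxstar : Q xstar) (Qx0 : Q x0) (L0_gt0 : 0 < L0) (L0_le : L0 <= L).
Hypothesis run : mtm_run hM fs h d nrm Q L0 x0 N Lacc alpha A x y u.

Local Notation F := (fobj hM fs h).
Let L_gt0 : 0 < L := lt_le_trans L0_gt0 L0_le.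
Let Lstart k := if k is k'.+1 then Lacc k' / 2 else L0 / 2.

Lemma run_feasible k : (k <= N)%N ->
  [/\ Q (x k), Q (u k), 0 <= A k & 0 < Lstart k <= L].
Proof.
case: run => x_0 u_0 _ [A_0 _] [cnt step].
elim: k => [_|k IH kN].
  rewrite x_0 u_0 A_0 /= divr_gt0 //; split => //=.
  by rewrite ler_pdivrMr // (le_trans L0_le) // ler_peMr ?(ltW L_gt0) ?ler1n.
have [Qxk Quk Ak0 /andP[Ls0 LsL]] := IH (ltnW kN).
have [Lk Ak1 tr _ rej] := step k kN.
have Lk0 : 0 < Lacc k by rewrite Lk mulr_gt0 // exprn_gt0.
have [a0 _ Qu1 Qx1] := trial_props cQ Qxk Quk Ak0 Lk0 tr.
have := accepted_const_le hn cQ df hL Qxk Quk Ak0 Ls0 LsL rej; rewrite -Lk => Lk2.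
by rewrite Ak1 /= divr_gt0 //; split => //; lra.
Qed.

Lemma run_step k : (k < N)%N ->
  [/\ 0 < alpha k.+1, A k.+1 = A k + alpha k.+1,
      A k + alpha k.+1 = Lacc k * alpha k.+1 ^+ 2 & Lacc k <= 2 * L].
Proof.
move=> kN; case: (run) => _ _ _ _ [cnt /(_ k kN) [Lk Ak1 tr _ _]].
have [Qxk Quk Ak0 /andP[Ls0 _]] := run_feasible (ltnW kN).
have [_ _ _ /andP[_ Lk2]] := run_feasible kN.
have Lk0 : 0 < Lacc k by rewrite Lk mulr_gt0 // exprn_gt0.
have [a0 _ _ _] := trial_props cQ Qxk Quk Ak0 Lk0 tr.
by case: tr => [[root _] _ _ _]; split => //; move: Lk2 => /=; lra.
Qed.

Lemma run_estimate k : (k <= N)%N ->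
  A k * (F (x k) - F xstar) <= bregman d xstar x0 - bregman d xstar (u k).
Proof.
elim: k => [_|k IH kN].
  by case: run => _ u_0 _ [A_0 _] _; rewrite A_0 u_0 mul0r subrr.
case: (run) => _ _ _ _ [cnt /(_ k kN) [Lk Ak1 tr acc _]].
have [Qxk Quk Ak0 /andP[Ls0 _]] := run_feasible (ltnW kN).
have Lk0 : 0 < Lacc k by rewrite Lk mulr_gt0 // exprn_gt0.
have := step_estimate hn cQ cf df ch pd Qxk Quk Ak0 Lk0 tr Qxstar acc.
have := IH (ltnW kN); rewrite Ak1.
generalize (A k) (alpha k.+1) (F (x k)) (F (x k.+1)) (F xstar) (bregman d xstar x0)
  (bregman d xstar (u k)) (bregman d xstar (u k.+1)).
by move=> *; lra.
Qed.

Lemma run_growth k : (1 <= k <= N)%N -> (k.+1)%:R ^+ 2 <= 8 * L * A k.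
Proof.
apply: (sqr_le_of_gap (B := fun k => 8 * L * A k)) => [|j jN].
  by case: run => _ _ _ [-> _] _; rewrite mulr0.
have [a0 -> root Lj] := run_step jN.
split; first by rewrite ltr_pM2l ?mulr_gt0 // ltrDl.
have -> : 8 * L * (A j + alpha j.+1) - 8 * L * A j = 8 * L * alpha j.+1 by ring.
have Lj' : 0 <= 2 * L - Lacc j by rewrite subr_ge0.
have := mulr_ge0 (mulr_ge0 (ltW L_gt0) (sqr_ge0 (alpha j.+1))) Lj'.
by rewrite root; lra.
Qed.

End MirrorTriangleRun.

Unset Implicit Arguments.

Theorem theorem2 (R : realType) (n M : nat) (hM : (0 < M)%N)
  (nrm : 'rV[R]_n -> R) (Q : set 'rV[R]_n)
  (fs : 'I_M -> 'rV[R]_n -> R) (h : 'rV[R]_n -> R) (L : R)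
  (d : 'rV[R]_n -> R) (xstar x0 : 'rV[R]_n) (Rad L0 : R) (N : nat)
  (Lacc alpha A : nat -> R) (x y u : nat -> 'rV[R]_n) :
  is_norm nrm ->
  closed Q -> convexR_set Q ->
  (forall i, convex_fun_on Q (fs i)) ->
  (forall i z, Q z -> differentiable (fs i) z) ->
  (forall i z w, Q z -> Q w ->
     dual_norm nrm (grad (fs i) z - grad (fs i) w) <= L * nrm (z - w)) ->
  convex_fun_on Q h ->
  Q xstar -> (forall z, Q z -> fobj hM fs h xstar <= fobj hM fs h z) ->
  prox_function nrm Q d ->
  Q x0 -> bregman d xstar x0 <= Rad ^+ 2 ->
  (1 <= N)%N -> 0 < L0 -> L0 <= L ->
  mtm_run hM fs h d nrm Q L0 x0 N Lacc alpha A x y u ->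
  fobj hM fs h (x N) - fobj hM fs h xstar <= 8 * L * Rad ^+ 2 / (N.+1)%:R ^+ 2.
Proof.
move=> hn _ cQ cf df hL ch Qs _ pd Qx0 hR N1 L0_gt0 L0_le run.
have L_gt0 : 0 < L by lra.
have est := run_estimate hn cQ cf df hL ch pd Qs Qx0 L0_gt0 L0_le run (leqnn N).
have grow : (N.+1)%:R ^+ 2 <= 8 * L * A N.
  by apply: (run_growth hn cQ df hL Qx0 L0_gt0 L0_le run); rewrite N1 leqnn.
have [_ QuN _ _] := run_feasible hn cQ df hL Qx0 L0_gt0 L0_le run (leqnn N).
have [dd _ sd] := pd.
have VN_ge0 : 0 <= bregman d xstar (u N).
  by apply: le_trans (bregman_ge_sqr sd (dd _ QuN) Qs QuN); rewrite divr_ge0 ?sqr_ge0.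
rewrite ler_pdivlMr ?exprn_gt0 ?ltr0Sn //.
apply: (mul_le_of_le_scaled (B := 8 * L * A N)).
- by rewrite grow exprn_ge0.
- by rewrite mulr_ge0 ?sqr_ge0 // mulr_ge0 // ltW.
- by rewrite -mulrA ler_pM2l ?mulr_gt0 //; lra.
Qed.
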